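(* The boxed ramified monoid $\mathcal{BR}(\mathfrak{S}_n)$ is generated by $e_1,\ldots,e_{n-1}$ and $z_1,\ldots,z_{n-1}$.
   Context: $\mathfrak{C}_n$ is the partition monoid: set partitions of $[2n]$ (top points $1,\dots,n$, bottom points $n+1,\dots,2n$) with concatenation product $I*J$ (identify bottom point $n+i$ of $I$ with top point $i$ of $J$, join blocks transitively, delete the middle points). $I\preceq J$ means each block of $J$ is a union of blocks of $I$. $\mathfrak{S}_n\subseteq\mathfrak{C}_n$ consists of the partitions with all blocks of the form $\{i,n+j\}$; $s_i$ is the simple transposition; $1=\{\{i,n+i\}\}$. A set partition $J$ of $[2n]$ is boxed if $1\preceq J$ and the restriction of $J$ to $[n]$ is linear (all blocks intervals). For a submonoid $M\subseteq\mathfrak{C}_n$, $\mathcal{BR}(M)$ is the set of pairs $(I,J)$ with $I\in M$, $J$ boxed and $I\preceq J$, with product $(I,J)(H,K)=(I*H,J*K)$. Let $b_i$ be obtained from $1$ by merging the blocks $\{i,n+i\}$ and $\{i+1,n+i+1\}$; set $e_i=(1,b_i)$ and $z_i=(s_i,b_i)$ for $i\in[n-1]$. *)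

From mathcomp Require Import all_boot all_order.
Set Implicit Arguments. Unset Strict Implicit. Unset Printing Implicit Defensive.

(* Points of [2n], 0-indexed: top points 0..n-1 (paper: 1..n),
   bottom points n..2n-1 (paper: n+1..2n). *)
Definition pt (n : nat) := 'I_(n + n).

(* A (candidate) set partition of [2n] is represented by its equivalence
   relation, as a finite set of pairs ("x and y lie in the same block"). *)
Definition part (n : nat) := {set (pt n * pt n)}.

Definition is_setpart n (I : part n) : bool :=
  [&& [forall x, (x, x) \in I],
      [forall x, forall y, ((x, y) \in I) ==> ((y, x) \in I)] &
      [forall x, forall y, forall z,
         ((x, y) \in I) && ((y, z) \in I) ==> ((x, z) \in I)]].

Definition pblk n (I : part n) (x : pt n) : {set pt n} := [set y | (x, y) \in I].

Definition prefines n (I J : part n) : bool :=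
  [forall x, pblk J x == \bigcup_(y in pblk J x) pblk I y].

(* Nodes: inl x = point x of (a copy of) I,
   inr y = point y of (a copy of) J; bottom point n+i of I is identified
   with top point i of J.  Blocks are joined transitively (connect), and the
   result is read off on the top points of I and the bottom points of J. *)
Definition pedge n (I J : part n) : rel (pt n + pt n) := fun u v =>
  match u, v with
  | inl x, inl y => (x, y) \in I
  | inr x, inr y => (x, y) \in J
  | inl x, inr y => (nat_of_ord x == n + y) && (y < n)
  | inr y, inl x => (nat_of_ord x == n + y) && (y < n)
  end.

Definition pnode n (x : pt n) : pt n + pt n := if x < n then inl x else inr x.

Definition pmul n (I J : part n) : part n :=
  [set p | connect (pedge I J) (pnode p.1) (pnode p.2)].

Definition part_of_lab n (f : nat -> nat) : part n :=
  [set p : pt n * pt n | f p.1 == f p.2].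

Definition pid n : part n := part_of_lab n (fun x => x %% n).

Definition in_Sn n (I : part n) : bool :=
  is_setpart I &&
  [forall x, (#|[set y in pblk I x | y < n]| == 1) &&
             (#|[set y in pblk I x | n <= y]| == 1)].

(* Boxed: 1 <= J and the restriction of J to the top points is linear
   (all its blocks are intervals). *)
Definition boxed n (J : part n) : bool :=
  [&& is_setpart J, prefines (pid n) J &
      [forall x : pt n, forall y : pt n, forall z : pt n,
         [&& z < n, x <= y, y <= z & (x, z) \in J] ==> ((x, y) \in J)]].

Definition in_BR n (p : part n * part n) : bool :=
  [&& in_Sn p.1, boxed p.2 & prefines p.1 p.2].

Definition brmul n (p q : part n * part n) : part n * part n :=
  (pmul p.1 q.1, pmul p.2 q.2).

Definition brid n : part n * part n := (pid n, pid n).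

(* 0-indexed generators: index i (0 <= i < n-1) stands for the paper's i+1. *)
(* b_i : merge the blocks {i, n+i} and {i+1, n+i+1} of 1. *)
Definition bgen n (i : nat) : part n :=
  part_of_lab n (fun x => let k := x %% n in if k == i.+1 then i else k).

Definition sgen n (i : nat) : part n :=
  part_of_lab n (fun x =>
    if x < n then x
    else let k := x - n in if k == i then i.+1 else if k == i.+1 then i else k).

Definition egen n (i : nat) : part n * part n := (pid n, bgen n i).
Definition zgen n (i : nat) : part n * part n := (sgen n i, bgen n i).

Definition BR_gens n : seq (part n * part n) :=
  [seq egen n i | i <- iota 0 n.-1] ++ [seq zgen n i | i <- iota 0 n.-1].

Definition brprod n (s : seq (part n * part n)) : part n * part n :=
  foldr (@brmul n) (brid n) s.

From mathcomp Require Import all_boot all_order.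
From mathcomp Require Import zify.
Set Implicit Arguments. Unset Strict Implicit. Unset Printing Implicit Defensive.

(* An element (σ, J) of BR(S_n) is described by two labels: the permutation s
   of {0, ..., n-1} putting bottom point n + k in the block of top point s k,
   and the set S of the k such that J joins the columns k and k + 1.  The
   condition σ ≼ J says exactly that s maps every interval of S into itself.
   Concatenation composes the permutations and takes the union of the sets,
   and e_i, z_i have labels (id, {i}) and (s_i, {i}), so every product of
   generators lies in BR(S_n).  Conversely, bubble-sorting s inside the
   intervals of S writes s as a product of transpositions s_i with i in S,
   whence (σ, J) = z_(i_1) ... z_(i_m) e_(j_1) ... e_(j_r) with j_1, ..., j_r
   enumerating S. *)

(* [seg_min S k] is the least point of the interval of [k] in the partition of
   [nat] that joins [i] and [i.+1] whenever [S i]. *)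
Fixpoint seg_min (S : pred nat) (k : nat) : nat :=
  if k is k'.+1 then (if S k' then seg_min S k' else k) else 0.

Section SegMin.
Variable S : pred nat.

Lemma seg_minS k : seg_min S k.+1 = (if S k then seg_min S k else k.+1).
Proof. by []. Qed.

Lemma seg_min_le k : seg_min S k <= k.
Proof. by elim: k => //= k IH; case: (S k) => //; apply: leqW. Qed.

Lemma leq_seg_min a b : a <= b -> seg_min S a <= seg_min S b.
Proof.
elim: b => [|b IH]; first by rewrite leqn0 => /eqP ->.
rewrite leq_eqVlt => /orP [/eqP -> //| /IH ab]; rewrite seg_minS.
by case: (S b) => //; apply: leq_trans ab (leq_trans (seg_min_le b) _).
Qed.

Lemma eq_seg_min_range a b : a <= b ->
  seg_min S a = seg_min S b <-> forall k, a <= k < b -> S k.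
Proof.
move=> ab; split.
- move=> E k /andP [ak kb]; apply/negPn/negP => Sk.
  have := leq_seg_min ak; have := leq_seg_min kb.
  rewrite seg_minS (negbTE Sk) E; have := seg_min_le k; lia.
- elim: b ab => [|b IH]; first by rewrite leqn0 => /eqP ->.
  rewrite leq_eqVlt => /orP [/eqP -> //| ab] H.
  have Sb : S b by apply: H; rewrite -ltnS ab /=.
  rewrite seg_minS Sb; apply: IH => // k /andP [ak kb].
  by apply: H; rewrite ak ltnS ltnW.
Qed.

End SegMin.

Lemma seg_min_eq_sub (S U : pred nat) a b : (forall k, S k -> U k) ->
  seg_min S a = seg_min S b -> seg_min U a = seg_min U b.
Proof.
move=> SU; wlog ab : a b / a <= b.
  by move=> hw; case/orP: (leq_total a b) => /hw // h /esym /h.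
by move=> /(eq_seg_min_range S ab) H; apply/(eq_seg_min_range U ab) => k /H /SU.
Qed.

Lemma eq_seg_min (S T : pred nat) k :
  (forall j, j < k -> S j = T j) -> seg_min S k = seg_min T k.
Proof.
elim: k => //= k IH H; rewrite H // IH // => j jk; apply: H; exact: ltnW.
Qed.

Lemma seg_min0 k : seg_min pred0 k = k.
Proof. by elim: k. Qed.

Lemma seg_min1 i k : seg_min (pred1 i) k = (if k == i.+1 then i else k).
Proof.
elim: k => [|k IH] //=; rewrite IH eqSS; case: (eqVneq k i) => [->|ki] //.
by case: ifP.
Qed.

Lemma part_of_lab_setpart n f : is_setpart (part_of_lab n f).
Proof.
apply/and3P; split.
- by apply/forallP => x; rewrite inE.
- by apply/forallP => x; apply/forallP => y; apply/implyP; rewrite !inE eq_sym.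
- apply/forallP => x; apply/forallP => y; apply/forallP => z; apply/implyP.
  by rewrite !inE => /andP [/eqP -> /eqP ->].
Qed.

Section SetPartition.
Variables (n : nat) (I : part n).
Hypothesis spI : is_setpart I.

Lemma setpart_refl x : (x, x) \in I.
Proof. by case/and3P: spI => /forallP. Qed.

Lemma setpart_sym x y : (x, y) \in I -> (y, x) \in I.
Proof. by case/and3P: spI => _ /forallP /(_ x) /forallP /(_ y) /implyP. Qed.

Lemma setpart_trans x y z : (x, y) \in I -> (y, z) \in I -> (x, z) \in I.
Proof.
case/and3P: spI => _ _ /forallP /(_ x) /forallP /(_ y) /forallP /(_ z) /implyP H xy yz.
by apply: H; rewrite xy yz.
Qed.

End SetPartition.

Lemma prefines_mem n (I J : part n) x y :
  prefines I J -> is_setpart J -> (x, y) \in I -> (x, y) \in J.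
Proof.
move=> /forallP /(_ x) /eqP /setP /(_ y) + spJ xy; rewrite inE => ->.
by apply/bigcupP; exists x; rewrite inE // setpart_refl.
Qed.

Lemma prefines_comp n (I J : part n) :
  (forall x, (x, x) \in I) ->
  (forall x y z, (x, y) \in J -> (y, z) \in I -> (x, z) \in J) ->
  prefines I J.
Proof.
move=> reflI compJI; apply/forallP => x; apply/eqP/setP => z; rewrite inE.
apply/idP/bigcupP => [xz | [y]]; first by exists z; rewrite inE.
by rewrite !inE; apply: compJI.
Qed.

Lemma ex_pt n k : k < n + n -> exists t : pt n, t = k :> nat.
Proof. by move=> h; exists (Ordinal h). Qed.

Lemma connect_label (T : finType) (e : rel T) (U : eqType) (f : T -> U) :
  (forall u v, e u v -> f u = f v) -> forall u v, connect e u v -> f u = f v.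
Proof.
move=> ef u v /connectP [p + ->]; elim: p u => //= w p IH u /andP [/ef -> ].
exact: IH.
Qed.

Lemma pedge_sym n (I J : part n) :
  is_setpart I -> is_setpart J -> symmetric (pedge I J).
Proof.
by move=> spI spJ [x|x] [y|y] //=; apply/idP/idP; apply: setpart_sym.
Qed.

Section ProductByLabels.
Variables (n : nat) (I J : part n) (l : pt n + pt n -> nat) (f : nat -> nat).
Hypotheses (spI : is_setpart I) (spJ : is_setpart J).
Hypothesis l_edge : forall u v, pedge I J u v -> l u = l v.
Hypothesis l_top :
  forall u, exists2 w : pt n, w = l u :> nat & connect (pedge I J) u (inl w).
Hypothesis l_pnode : forall a : pt n, l (pnode a) = f a.

Lemma pmul_by_label : pmul I J = part_of_lab n f.
Proof.
apply/setP => [[a b]]; rewrite !inE /= -!l_pnode.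
apply/idP/eqP => [/(connect_label l_edge) // | lab_ab].
have [wa wa_l ca] := l_top (pnode a); have [wb wb_l cb] := l_top (pnode b).
have wab : wa = wb by apply: ord_inj; rewrite wa_l wb_l.
rewrite wab in ca; apply: connect_trans ca _.
by rewrite (sym_connect_sym (pedge_sym spI spJ)).
Qed.

End ProductByLabels.

(* [perm_part n s] joins bottom point [n + k] to top point [s k]; [box_part n S]
   is the boxed partition joining the columns [k] and [k.+1] whenever [S k]. *)
Definition perm_lab n (s : nat -> nat) (x : nat) := if x < n then x else s (x - n).
Definition perm_part n (s : nat -> nat) : part n := part_of_lab n (perm_lab n s).
Definition box_part n (S : pred nat) : part n :=
  part_of_lab n (fun x => seg_min S (x %% n)).

Lemma perm_lab_top n s k : k < n -> perm_lab n s k = k.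
Proof. by rewrite /perm_lab => ->. Qed.

Lemma perm_lab_bot n s k : n <= k -> perm_lab n s k = s (k - n).
Proof. by rewrite /perm_lab ltnNge => ->. Qed.

Lemma perm_lab_lt n s x : (forall k, k < n -> s k < n) -> x < n + n -> perm_lab n s x < n.
Proof. by move=> s_lt x_lt; rewrite /perm_lab; case: (ltnP x n) => // xn; apply: s_lt; lia. Qed.

Section PermProduct.
Variables (n : nat) (s t : nat -> nat).
Hypotheses (s_lt : forall k, k < n -> s k < n) (t_lt : forall k, k < n -> t k < n).
Let I := perm_part n s.
Let J := perm_part n t.

Lemma perm_connect_inl (x w : pt n) :
  w = perm_lab n s x :> nat -> connect (pedge I J) (inl x) (inl w).
Proof.
move=> wE; apply: connect1.
by rewrite /= inE /= wE (perm_lab_top _ (perm_lab_lt s_lt (ltn_ord x))).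
Qed.

Lemma perm_connect_inr (y w : pt n) :
  y < n -> w = s y :> nat -> connect (pedge I J) (inr y) (inl w).
Proof.
move=> yn wE; have [x xE] : exists x : pt n, x = n + y :> nat by apply: ex_pt; lia.
apply: connect_trans (perm_connect_inl (x := x) _); first by apply: connect1; rewrite /= xE eqxx.
by rewrite wE perm_lab_bot xE ?addKn //; lia.
Qed.

Lemma pmul_perm_part : pmul I J = perm_part n (s \o t).
Proof.
pose l (u : pt n + pt n) :=
  match u with inl x => perm_lab n s x | inr y => s (perm_lab n t y) end.
apply: (@pmul_by_label _ _ _ l); try exact: part_of_lab_setpart.
- move=> [x|x] [y|y] /=; rewrite ?inE.
  + by move/eqP.
  + move=> /andP [/eqP xy yn].
    by rewrite xy (perm_lab_bot s (leq_addr y n)) addKn perm_lab_top.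
  + move=> /andP [/eqP yx xn].
    by rewrite yx (perm_lab_bot s (leq_addr x n)) addKn perm_lab_top.
  + by move/eqP => ->.
- move=> [x|y] /=.
    have [w wE] := ex_pt (ltn_addr n (perm_lab_lt s_lt (ltn_ord x))).
    by exists w => //; apply: perm_connect_inl.
  have yl := perm_lab_lt t_lt (ltn_ord y).
  have [w wE] := ex_pt (ltn_addr n (s_lt yl)); exists w => //.
  case: (ltnP y n) => yn; first by apply: perm_connect_inr; rewrite // wE perm_lab_top.
  have [y' y'E] := ex_pt (ltn_addr n yl).
  apply: connect_trans (perm_connect_inr (y := y') _ _); rewrite ?y'E //.
  by apply: connect1; rewrite /= inE /= y'E (perm_lab_top _ yl).
- by move=> a; rewrite /pnode /perm_lab; case: ifP => an /=; rewrite /perm_lab an.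
Qed.

End PermProduct.

Definition nval n (u : pt n + pt n) : nat := match u with inl x | inr x => nat_of_ord x end.

Section BoxProduct.
Variables (n : nat) (S T : pred nat).
Let U k := S k || T k.
Let I := box_part n S.
Let J := box_part n T.

Let conn_sym : connect_sym (pedge I J).
Proof. by apply: sym_connect_sym; apply: pedge_sym; apply: part_of_lab_setpart. Qed.

Let n_gt0 (u : pt n + pt n) : 0 < n.
Proof. by case: u => x; have := ltn_ord x; lia. Qed.

Let mod_pt (u : pt n + pt n) : exists r : pt n, r = nval u %% n :> nat.
Proof. by apply: ex_pt; apply: ltn_addr; exact: ltn_pmod _ (n_gt0 u). Qed.

Lemma box_connect_mod u (r : pt n) :
  r = nval u %% n :> nat -> connect (pedge I J) u (inl r).
Proof.
case: u => [x|y] /= rE; first by apply: connect1; rewrite /= inE /= rE modn_mod.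
have [r' r'E] := mod_pt (inr y).
have r'n : r' < n by rewrite r'E ltn_pmod // (n_gt0 (inr y)).
have [x' x'E] : exists x' : pt n, x' = n + r' :> nat by apply: ex_pt; rewrite ltn_add2l.
apply: (@connect_trans _ _ (inr r')).
  by apply: connect1; rewrite /= inE /= r'E modn_mod.
apply: (@connect_trans _ _ (inl x')); first by apply: connect1; rewrite /= x'E eqxx.
by apply: connect1; rewrite /= inE /= x'E rE r'E modnDl !modn_mod.
Qed.

Lemma box_connect_seg_min k (x w : pt n) : k < n -> x = k :> nat ->
  w = seg_min U k :> nat -> connect (pedge I J) (inl x) (inl w).
Proof.
elim: k x w => [|k IH] x w kn xE wE.
  by have -> : x = w by apply: ord_inj; rewrite xE wE.
move: wE; rewrite seg_minS; case Uk: (U k) => wE; last first.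
  by have -> : x = w by apply: ord_inj; rewrite xE wE.
have [xk xkE] : exists xk : pt n, xk = k :> nat by apply: ex_pt; lia.
apply: (@connect_trans _ _ (inl xk)); last by apply: IH => //; apply: ltnW.
move: Uk; rewrite /U; case Sk: (S k) => /= Tk.
  by apply: connect1; rewrite /= inE /= xE xkE !modn_small ?seg_minS ?Sk //; lia.
apply: (@connect_trans _ _ (inr x)).
  by rewrite conn_sym; apply: box_connect_mod; rewrite /= modn_small xE.
apply: (@connect_trans _ _ (inr xk)).
  by apply: connect1; rewrite /= inE /= xE xkE !modn_small ?seg_minS ?Tk //; lia.
by apply: box_connect_mod; rewrite /= modn_small // xkE; lia.
Qed.

Lemma pmul_box_part : pmul I J = box_part n U.
Proof.
apply: (@pmul_by_label _ _ _ (fun u => seg_min U (nval u %% n)));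
  try exact: part_of_lab_setpart.
- move=> [x|x] [y|y] /=; rewrite ?inE /=.
  + by move/eqP; apply: seg_min_eq_sub => k; rewrite /U => ->.
  + by move=> /andP [/eqP -> _]; rewrite modnDl.
  + by move=> /andP [/eqP -> _]; rewrite modnDl.
  + by move/eqP; apply: seg_min_eq_sub => k; rewrite /U => ->; rewrite orbT.
- move=> u; have [r rE] := mod_pt u.
  have r_lt : r < n by rewrite rE ltn_pmod // (n_gt0 u).
  have [w wE] := ex_pt (ltn_addr n (leq_ltn_trans (seg_min_le U r) r_lt)).
  exists w; first by rewrite wE rE.
  exact: connect_trans (box_connect_mod rE) (box_connect_seg_min r_lt erefl wE).
- by move=> a; rewrite /pnode; case: ifP.
Qed.

End BoxProduct.

Definition adjswap (i k : nat) : nat :=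
  if k == i then i.+1 else if k == i.+1 then i else k.

Lemma adjswapK i : involutive (adjswap i).
Proof.
move=> k; rewrite /adjswap; case: (eqVneq k i) => [->|ki].
  by rewrite eqxx (gtn_eqF (ltnSn i)).
case: (eqVneq k i.+1) => [->|ki1]; first by rewrite eqxx.
by rewrite (negbTE ki) (negbTE ki1).
Qed.

Lemma adjswap_lt n i k : i.+1 < n -> k < n -> adjswap i k < n.
Proof. by rewrite /adjswap; case: ifP => _; [lia | case: ifP => _; lia]. Qed.

Lemma seg_min_adjswap (S : pred nat) i k : S i -> seg_min S (adjswap i k) = seg_min S k.
Proof.
move=> Si; rewrite /adjswap; case: (eqVneq k i) => [->|_]; first by rewrite seg_minS Si.
by case: (eqVneq k i.+1) => [->|//]; rewrite seg_minS Si.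
Qed.

Lemma sgen_perm_part n i : sgen n i = perm_part n (adjswap i).
Proof. by []. Qed.

Lemma bgen_box_part n i : bgen n i = box_part n (pred1 i).
Proof. by apply/setP => [[a b]]; rewrite !inE /= !seg_min1. Qed.

Lemma modn_perm_lab_id n (x : pt n) : x %% n = perm_lab n id x.
Proof.
rewrite /perm_lab; case: (ltnP x n) => [/modn_small // | xn].
by rewrite -{1}(subnK xn) modnDr modn_small //; have := ltn_ord x; lia.
Qed.

Lemma pid_perm_part n : pid n = perm_part n id.
Proof. by apply/setP => [[a b]]; rewrite !inE /= !modn_perm_lab_id. Qed.

Lemma pid_box_part n : pid n = box_part n pred0.
Proof. by apply/setP => [[a b]]; rewrite !inE /= !seg_min0. Qed.

Lemma eq_perm_part n s t : (forall k, k < n -> s k = t k) -> perm_part n s = perm_part n t.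
Proof.
move=> st; apply/setP => [[a b]]; rewrite !inE /=.
suff labE (x : pt n) : perm_lab n s x = perm_lab n t x by rewrite !labE.
by rewrite /perm_lab; case: (ltnP x n) => // xn; apply: st; have := ltn_ord x; lia.
Qed.

Lemma eq_box_part n (S T : pred nat) :
  (forall j, j.+1 < n -> S j = T j) -> box_part n S = box_part n T.
Proof.
move=> ST; apply/setP => [[a b]]; rewrite !inE /=.
suff labE (x : pt n) : seg_min S (x %% n) = seg_min T (x %% n) by rewrite !labE.
have n_gt0 : 0 < n by have := ltn_ord x; lia.
by apply: eq_seg_min => j jx; apply: ST; exact: leq_ltn_trans jx (ltn_pmod x n_gt0).
Qed.

Definition block_perm n (s : nat -> nat) (S : pred nat) :=
  [/\ forall k, k < n -> s k < n,
      forall j, j < n -> exists2 k, k < n & s k = j,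
      forall j k, j < n -> k < n -> s j = s k -> j = k,
      forall k, S k -> k.+1 < n &
      forall k, k < n -> seg_min S (s k) = seg_min S k].

Lemma block_perm_id n (S : pred nat) :
  (forall k, S k -> k.+1 < n) -> block_perm n id S.
Proof. by split=> // j jn; exists j. Qed.

Lemma block_perm_comp n s S t T : block_perm n s S -> block_perm n t T ->
  block_perm n (s \o t) (fun k => S k || T k).
Proof.
move=> [s_lt s_onto s_inj S_lt sS] [t_lt t_onto t_inj T_lt tT]; split=> /=.
- by move=> k /t_lt /s_lt.
- move=> j /s_onto [k /t_onto [k' k'n <-] <-]; by exists k'.
- by move=> j k jn kn /s_inj E; apply: t_inj; rewrite // E // t_lt.
- by move=> k /orP [/S_lt | /T_lt].
- move=> k kn; rewrite (@seg_min_eq_sub S _ _ (t k)) ?sS ?t_lt // => [|j -> //].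
  by apply: (@seg_min_eq_sub T) (tT k kn) => j ->; rewrite orbT.
Qed.

Lemma block_perm_swap n s S i : block_perm n s S -> S i -> block_perm n (s \o adjswap i) S.
Proof.
move=> [s_lt s_onto s_inj S_lt sS] Si; have i_lt := S_lt i Si; split=> /=.
- by move=> k kn; apply/s_lt/adjswap_lt.
- move=> j /s_onto [k kn <-]; exists (adjswap i k); last by rewrite adjswapK.
  exact: adjswap_lt.
- move=> j k jn kn /s_inj E.
  by rewrite -(adjswapK i j) -(adjswapK i k) E // adjswap_lt.
- exact: S_lt.
- by move=> k kn; rewrite sS ?seg_min_adjswap // adjswap_lt.
Qed.

Definition br_lab n (s : nat -> nat) (S : pred nat) : part n * part n :=
  (perm_part n s, box_part n S).

Lemma brmul_lab n s S t T :
  (forall k, k < n -> s k < n) -> (forall k, k < n -> t k < n) ->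
  brmul (br_lab n s S) (br_lab n t T) = br_lab n (s \o t) (fun k => S k || T k).
Proof. by move=> s_lt t_lt; rewrite /brmul /= pmul_perm_part // pmul_box_part. Qed.

Lemma egen_lab n i : egen n i = br_lab n id (pred1 i).
Proof. by rewrite /egen pid_perm_part bgen_box_part. Qed.

Lemma zgen_lab n i : zgen n i = br_lab n (adjswap i) (pred1 i).
Proof. by rewrite /zgen sgen_perm_part bgen_box_part. Qed.

Lemma BR_gens_lab n g : g \in BR_gens n ->
  exists s S, block_perm n s S /\ g = br_lab n s S.
Proof.
rewrite mem_cat => /orP [] /mapP [i]; rewrite mem_iota add0n => /andP [_ i_lt] ->;
  have bp_id : block_perm n id (pred1 i) by apply: block_perm_id => k /eqP ->; lia.
  by exists id, (pred1 i); rewrite egen_lab.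
exists (id \o adjswap i), (pred1 i); rewrite zgen_lab; split => //.
exact: block_perm_swap bp_id (eqxx i).
Qed.

Lemma brprod_block_perm n gs : all (mem (BR_gens n)) gs ->
  exists s S, block_perm n s S /\ brprod gs = br_lab n s S.
Proof.
elim: gs => [_ | g gs IH /= /andP [/BR_gens_lab [s [S [bpS ->]]] /IH [t [T [bpT ->]]]]].
  exists id, pred0; split; first exact: block_perm_id.
  by rewrite /brprod /= /brid /br_lab {1}pid_perm_part pid_box_part.
exists (s \o t), (fun k => S k || T k); split; first exact: block_perm_comp.
by case: bpS => s_lt _ _ _ _; case: bpT => t_lt _ _ _ _; apply: brmul_lab.
Qed.

Lemma in_Sn_perm_part n s :
  (forall k, k < n -> s k < n) -> (forall j, j < n -> exists2 k, k < n & s k = j) ->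
  (forall j k, j < n -> k < n -> s j = s k -> j = k) -> in_Sn (perm_part n s).
Proof.
move=> s_lt s_onto s_inj; rewrite /in_Sn part_of_lab_setpart /=.
apply/forallP => x; have x_lab := perm_lab_lt s_lt (ltn_ord x).
apply/andP; split; apply/cards1P.
- have [t tE] := ex_pt (ltn_addr n x_lab); exists t; apply/setP => y; rewrite !inE /=.
  case: (ltnP y n) => yn; first by rewrite andbT (perm_lab_top _ yn) -tE eq_sym.
  by rewrite andbF; apply/esym/eqP => yt; move: yn; rewrite yt tE leqNgt x_lab.
- have [j jn jE] := s_onto _ x_lab.
  have [b bE] : exists b : pt n, b = n + j :> nat by apply: ex_pt; rewrite ltn_add2l.
  exists b; apply/setP => y; rewrite !inE /=.
  case: (ltnP y n) => yn.
    by rewrite andbF; apply/esym/eqP => yb; move: yn; rewrite yb bE ltnNge leq_addr.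
  rewrite andbT (perm_lab_bot _ yn) -jE; apply/eqP/eqP => [sjy | ->].
    have y_lt : y - n < n by have := ltn_ord y; lia.
    by apply: ord_inj; rewrite bE (s_inj _ _ jn y_lt sjy) subnKC.
  by rewrite bE addKn.
Qed.

Lemma boxed_box_part n (S : pred nat) : boxed (box_part n S).
Proof.
rewrite /boxed part_of_lab_setpart pid_box_part /=; apply/andP; split.
  apply: prefines_comp => [x | x y z]; rewrite !inE //= !seg_min0.
  by move=> /eqP -> /eqP ->.
apply/forallP => x; apply/forallP => y; apply/forallP => z; apply/implyP.
move=> /and4P [zn xy yz]; rewrite !inE /= !modn_small; try lia.
move=> /eqP xz; apply/eqP/eqP; rewrite eqn_leq leq_seg_min //=.
by rewrite xz leq_seg_min.
Qed.

Lemma prefines_perm_box n s S : block_perm n s S ->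
  prefines (perm_part n s) (box_part n S).
Proof.
move=> [s_lt _ _ _ sS].
have lab_mod (x : pt n) : seg_min S (x %% n) = seg_min S (perm_lab n s x).
  rewrite modn_perm_lab_id /perm_lab; case: ifP => // xn; rewrite sS //.
  by have := ltn_ord x; move: xn; rewrite ltnNge => /negbFE; lia.
apply: prefines_comp => [x | x y z]; rewrite !inE //=.
by move=> /eqP -> /eqP yz; rewrite !lab_mod yz.
Qed.

Lemma in_BR_lab n s S : block_perm n s S -> in_BR (br_lab n s S).
Proof.
move=> bp; have [s_lt s_onto s_inj _ _] := bp.
by rewrite /in_BR in_Sn_perm_part // boxed_box_part prefines_perm_box.
Qed.

Definition swap_word (l : seq nat) (k : nat) : nat := foldr adjswap k l.

Lemma swap_word_lt n l k : all (fun i => i.+1 < n) l -> k < n -> swap_word l k < n.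
Proof. by elim: l => //= i l IH /andP [i_lt /IH l_lt] /l_lt; apply: adjswap_lt. Qed.

Section SwapWords.
Variables (n : nat) (S : pred nat).

Definition is_swap_word (s : nat -> nat) :=
  exists2 l, all S l & forall k, k < n -> s k = swap_word l k.

Lemma is_swap_word_swap s i : i.+1 < n ->
  is_swap_word (s \o adjswap i) -> S i -> is_swap_word s.
Proof.
move=> i_lt [l Sl sE] Si; exists (rcons l i); first by rewrite all_rcons Si.
move=> k kn; rewrite /swap_word foldr_rcons -/(swap_word _ _) -sE ?adjswap_lt //=.
by rewrite adjswapK.
Qed.

(* Bubble the preimage [j] of [d] up to [d] by adjacent swaps, which all lie
   in one interval of [S] since [seg_min S d = seg_min S j]. *)
Lemma block_perm_sink d m : forall s j, j + m = d -> d < n -> block_perm n s S ->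
  (forall k, d < k < n -> s k = k) -> s j = d ->
  exists2 t, block_perm n t S /\ (forall k, d <= k < n -> t k = k) &
             (is_swap_word t -> is_swap_word s).
Proof.
elim: m => [|m IH] s j jd dn bp s_fix sj.
  exists s => //; split=> // k /andP [+ kn]; rewrite leq_eqVlt => /orP [/eqP <- | dk].
    by rewrite -{1}jd addn0.
  by apply: s_fix; rewrite dk.
have [_ _ _ S_lt sS] := bp.
have Sj : S j.
  have jd' : j <= d by rewrite -jd leq_addr.
  have := sS j (leq_ltn_trans jd' dn); rewrite sj => /esym /(eq_seg_min_range S jd').
  by apply; rewrite leqnn -jd addnS ltnS leq_addr.
have s'_fix k : d < k < n -> (s \o adjswap j) k = k.
  move=> /andP [dk kn]; rewrite /= /adjswap !ifN_eq ?s_fix ?dk //; lia.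
have s'j : (s \o adjswap j) j.+1 = d by rewrite /= /adjswap eqxx (gtn_eqF (ltnSn j)).
have [|t t_bp t_word] := IH _ j.+1 _ dn (block_perm_swap bp Sj) s'_fix s'j.
  by rewrite addSnnS.
by exists t => // /t_word s_word; exact: is_swap_word_swap (S_lt j Sj) s_word Sj.
Qed.

Lemma block_perm_is_swap_word s : block_perm n s S -> is_swap_word s.
Proof.
suff fix_above d s' : block_perm n s' S -> (forall k, d <= k < n -> s' k = k) ->
    is_swap_word s'.
  by move=> bp; apply: (fix_above n) => // k /andP [nk kn]; lia.
elim: d s' => [|d IH] s' bp s_fix; first by exists [::] => // k kn; apply: s_fix.
case: (ltnP d n) => dn; last by apply: IH => // k /andP [dk kn]; lia.
have [_ s_onto _ _ _] := bp; have [j jn sj] := s_onto d dn.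
have jd : j <= d.
  by case: leqP => // dj; have := s_fix j; rewrite dj jn sj => /(_ isT); lia.
have [t [t_bp t_fix]] := block_perm_sink (subnKC jd) dn bp s_fix sj.
by apply; apply: IH.
Qed.

End SwapWords.

Lemma brprod_egens n E : all (fun i => i.+1 < n) E ->
  brprod (map (egen n) E) = br_lab n id (mem E).
Proof.
elim: E => [_ | i E IH /= /andP [i_lt /IH E_lab]].
  by rewrite /brprod /= /brid /br_lab {1}pid_perm_part pid_box_part.
by rewrite /brprod /= -/(brprod _) E_lab egen_lab brmul_lab.
Qed.

Lemma brprod_words n l E : all (fun i => i.+1 < n) l -> all (fun i => i.+1 < n) E ->
  brprod (map (zgen n) l ++ map (egen n) E) =
  br_lab n (swap_word l) (fun k => (k \in l) || (k \in E)).
Proof.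
move=> + E_lt; elim: l => [_ | i l IH /= /andP [i_lt l_lt]]; first exact: brprod_egens.
rewrite /brprod /= -/(brprod _) IH // zgen_lab brmul_lab; first last.
- by move=> k; apply: swap_word_lt.
- by move=> k; apply: adjswap_lt.
by congr (_, _); apply: eq_box_part => j _; rewrite in_cons orbA.
Qed.

Definition related n (J : part n) (a b : nat) : bool :=
  [exists x : pt n, exists y : pt n, [&& x == a :> nat, y == b :> nat & (x, y) \in J]].

Section Related.
Variables (n : nat) (J : part n).
Hypothesis spJ : is_setpart J.

Lemma relatedE (x y : pt n) : related J x y = ((x, y) \in J).
Proof.
apply/existsP/idP => [[x' /existsP [y' /and3P [/eqP xx' /eqP yy' xy]]] | xy].
  by rewrite -(ord_inj xx') -(ord_inj yy').
by exists x; apply/existsP; exists y; rewrite !eqxx xy.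
Qed.

Lemma relatedP a b :
  reflect (exists x y : pt n, [/\ x = a :> nat, y = b :> nat & (x, y) \in J]) (related J a b).
Proof.
apply: (iffP existsP) => [[x /existsP [y /and3P [/eqP xa /eqP yb xy]]] | [x [y [<- <- xy]]]].
  by exists x, y.
by rewrite -relatedE in xy; case/existsP: xy => x' xy'; exists x'.
Qed.

Lemma related_refl a : a < n + n -> related J a a.
Proof. by move=> /ex_pt [x <-]; rewrite relatedE setpart_refl. Qed.

Lemma related_sym a b : related J a b -> related J b a.
Proof. by move=> /relatedP [x [y [<- <- xy]]]; rewrite relatedE setpart_sym. Qed.

Lemma related_trans a b c : related J a b -> related J b c -> related J a c.
Proof.
move=> /relatedP [x [y [<- yb xy]]] /relatedP [y' [z [y'b <- yz]]].
have yy' : y = y' by apply: ord_inj; rewrite yb y'b.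
by rewrite relatedE (setpart_trans spJ xy) // yy'.
Qed.

End Related.

Definition box_of n (J : part n) (k : nat) : bool := (k.+1 < n) && related J k k.+1.

Section BoxedPartition.
Variables (n : nat) (J : part n).
Hypothesis boxJ : boxed J.

Let spJ : is_setpart J. Proof. by case/and3P: boxJ. Qed.

Lemma related_top_interval a b : a <= b -> b < n ->
  related J a b <-> forall k, a <= k < b -> box_of J k.
Proof.
move=> ab bn; split.
- move=> /relatedP [x [z [xa zb xz]]] k /andP [ak kb].
  have lin (y : pt n) : x <= y -> y <= z -> (x, y) \in J.
    case/and3P: boxJ => _ _ /forallP /(_ x) /forallP /(_ y) /forallP /(_ z) /implyP.
    by move=> + xy yz; apply; rewrite xz xy yz zb bn.
  have [y yk] : exists y : pt n, y = k :> nat by apply: ex_pt; lia.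
  have [y' y'k] : exists y' : pt n, y' = k.+1 :> nat by apply: ex_pt; lia.
  rewrite /box_of (leq_ltn_trans kb bn) -y'k -yk relatedE /=.
  have xy : (x, y) \in J by apply: lin; lia.
  have xy' : (x, y') \in J by apply: lin; lia.
  apply: (setpart_trans spJ (setpart_sym spJ xy)) xy'.
- move=> box_ab.
  suff rel_am m : m <= b - a -> related J a (a + m) by rewrite -(subnKC ab); apply: rel_am.
  elim: m => [|m IH] mb; first by rewrite addn0; apply: (related_refl spJ); lia.
  rewrite addnS; apply: (related_trans spJ (IH (ltnW mb))).
  have /andP [_ //] : box_of J (a + m) by apply: box_ab; lia.
Qed.

Lemma related_top a b : a < n -> b < n ->
  related J a b <-> seg_min (box_of J) a = seg_min (box_of J) b.
Proof.
wlog ab : a b / a <= b.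
  move=> hw an bn; case/orP: (leq_total a b) => [ab | ba]; first exact: hw.
  have rel_ba := hw b a ba bn an.
  split=> [/(related_sym spJ) /rel_ba -> // | ab_seg].
  by apply: (related_sym spJ); apply/rel_ba; rewrite ab_seg.
by move=> _ bn; rewrite related_top_interval // eq_seg_min_range.
Qed.

Lemma boxed_box_of : J = box_part n (box_of J).
Proof.
apply/setP => [[x y]]; rewrite inE /=.
have n_gt0 : 0 < n by have := ltn_ord x; lia.
have to_mod (z : pt n) : exists2 r : pt n, r = z %% n :> nat & (z, r) \in J.
  have [r rE] := ex_pt (ltn_addr n (ltn_pmod z n_gt0)); exists r => //.
  case/and3P: boxJ => _ pidJ _; apply: prefines_mem pidJ spJ _.
  by rewrite inE /= rE modn_mod.
have [rx rxE xr] := to_mod x; have [ry ryE yr] := to_mod y.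
have -> : ((x, y) \in J) = ((rx, ry) \in J).
  apply/idP/idP => [xy | rxy].
    exact: (setpart_trans spJ (setpart_sym spJ xr) (setpart_trans spJ xy yr)).
  exact: (setpart_trans spJ xr (setpart_trans spJ rxy (setpart_sym spJ yr))).
have := related_top (ltn_pmod x n_gt0) (ltn_pmod y n_gt0).
by rewrite -relatedE rxE ryE => rel_seg; apply/idP/eqP => /rel_seg.
Qed.

End BoxedPartition.

Definition top_of n (I : part n) (x : pt n) : nat :=
  oapp (@nat_of_ord _) 0 [pick y : pt n | ((x, y) \in I) && (y < n)].

Definition perm_of n (I : part n) (j : nat) : nat :=
  oapp (top_of I) 0 [pick x : pt n | x == n + j :> nat].

Lemma perm_of_bot n (I : part n) j (x : pt n) : x = n + j :> nat -> perm_of I j = top_of I x.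
Proof.
move=> xE; rewrite /perm_of; case: pickP => [y /eqP yE | no_x] /=.
  by congr top_of; apply: ord_inj; rewrite yE xE.
by have := no_x x; rewrite xE eqxx.
Qed.

Lemma bot_pt n j : j < n -> exists x : pt n, x = n + j :> nat.
Proof. by move=> jn; apply: ex_pt; rewrite ltn_add2l. Qed.

Lemma cards1_block_uniq n (I : part n) x (P : pred (pt n)) :
  #|[set y in pblk I x | P y]| == 1 ->
  exists t, [/\ P t, (x, t) \in I & forall y, P y -> (x, y) \in I -> y = t].
Proof.
move=> /cards1P [t tE]; exists t.
have : t \in [set y in pblk I x | P y] by rewrite tE set11.
rewrite !inE => /andP [xt Pt]; split=> // y Py xy.
by apply/set1P; rewrite -tE !inE xy Py.
Qed.

Section PermutationPartition.
Variables (n : nat) (I : part n).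
Hypothesis SnI : in_Sn I.

Let spI : is_setpart I. Proof. by case/andP: SnI. Qed.

Lemma top_ofP x : exists t : pt n,
  [/\ t < n, (x, t) \in I, top_of I x = t & forall y : pt n, y < n -> (x, y) \in I -> y = t].
Proof.
case/andP: SnI => _ /forallP /(_ x) /andP [/cards1_block_uniq [t [tn xt t_uniq]] _].
exists t; split=> //; rewrite /top_of; case: pickP => [y /andP [xy yn] | no_top] /=.
  by rewrite (t_uniq y yn xy).
by have := no_top t; rewrite xt tn.
Qed.

Lemma block_bottom_pt x : exists b : pt n,
  [/\ n <= b, (x, b) \in I & forall y : pt n, n <= y -> (x, y) \in I -> y = b].
Proof. by case/andP: SnI => _ /forallP /(_ x) /andP [_ /cards1_block_uniq]. Qed.

Lemma top_of_eq x y : ((x, y) \in I) <-> top_of I x = top_of I y.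
Proof.
have [tx [txn xtx -> _]] := top_ofP x; have [ty [_ yty -> ty_uniq]] := top_ofP y.
split=> [xy | /ord_inj txy].
  by rewrite (ty_uniq tx txn (setpart_trans spI (setpart_sym spI xy) xtx)).
by rewrite (setpart_trans spI xtx) // txy setpart_sym.
Qed.

Lemma top_of_top (x : pt n) : x < n -> top_of I x = x.
Proof. by move=> xn; have [t [_ _ -> t_uniq]] := top_ofP x; rewrite -(t_uniq x) ?setpart_refl. Qed.

Lemma perm_lab_of (x : pt n) : perm_lab n (perm_of I) x = top_of I x.
Proof.
by rewrite /perm_lab; case: (ltnP x n) => xn;
  [rewrite top_of_top | rewrite (perm_of_bot _ (esym (subnKC xn)))].
Qed.

Lemma Sn_perm_of : I = perm_part n (perm_of I).
Proof.
by apply/setP => [[x y]]; rewrite inE /= !perm_lab_of; apply/idP/eqP => /top_of_eq.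
Qed.

End PermutationPartition.

Lemma block_perm_of n (I J : part n) :
  in_Sn I -> boxed J -> prefines I J -> block_perm n (perm_of I) (box_of J).
Proof.
move=> SnI boxJ IJ; have spI : is_setpart I by case/andP: SnI.
have spJ : is_setpart J by case/and3P: boxJ.
split.
- move=> j /bot_pt [x /(perm_of_bot I) ->].
  by have [t [tn _ -> _]] := top_ofP SnI x.
- move=> i i_lt; have [ti tiE] := ex_pt (ltn_addr n i_lt).
  have [b [bn tib _]] := block_bottom_pt SnI ti.
  exists (b - n); first by have := ltn_ord b; lia.
  rewrite (perm_of_bot _ (esym (subnKC bn))) -(proj1 (top_of_eq SnI _ _) tib).
  by rewrite (top_of_top SnI) tiE.
- move=> j k /bot_pt [xj xjE] /bot_pt [xk xkE].
  rewrite (perm_of_bot _ xjE) (perm_of_bot _ xkE) => /(top_of_eq SnI) xjk.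
  have [b [_ _ b_uniq]] := block_bottom_pt SnI xj.
  have xj_bot : n <= xj by rewrite xjE leq_addr.
  have xk_bot : n <= xk by rewrite xkE leq_addr.
  have xjb := b_uniq xj xj_bot (setpart_refl spI xj).
  have xkb := b_uniq xk xk_bot xjk.
  by apply/eqP; rewrite -(eqn_add2l n) -xjE -xkE xjb xkb.
- by move=> k /andP [].
- move=> k kn; have [x xE] := bot_pt kn.
  have [t [tn xt tE _]] := top_ofP SnI x.
  have := prefines_mem IJ spJ xt; rewrite {1}(boxed_box_of boxJ) inE /=.
  by rewrite (perm_of_bot _ xE) tE xE modnDl !modn_small // => /eqP.
Qed.

Lemma all_BR_gens_words n l E : all (fun i => i.+1 < n) l -> all (fun i => i.+1 < n) E ->
  all (mem (BR_gens n)) (map (zgen n) l ++ map (egen n) E).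
Proof.
have iota_lt i : i.+1 < n -> i \in iota 0 n.-1 by rewrite mem_iota; lia.
move=> /allP l_lt /allP E_lt; rewrite all_cat !all_map.
apply/andP; split; apply/allP => i /= i_in; rewrite mem_cat map_f ?orbT //.
  exact/iota_lt/l_lt.
exact/iota_lt/E_lt.
Qed.

Theorem proposition5p12 (n : nat) (p : part n * part n) :
  in_BR p <->
  exists s : seq (part n * part n),
    all (fun g => g \in BR_gens n) s /\ p = brprod s.
Proof.
split=> [|[gs [gs_gens ->]]]; last first.
  by have [s [S [bp ->]]] := brprod_block_perm gs_gens; apply: in_BR_lab.
case: p => I J /and3P [/= SnI boxJ IJ].
have bp := block_perm_of SnI boxJ IJ; have [_ _ _ box_lt _] := bp.
have [l l_box sE] := block_perm_is_swap_word bp.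
pose E := filter (box_of J) (iota 0 n.-1).
have l_lt : all (fun i => i.+1 < n) l by apply/allP => i /(allP l_box) /box_lt.
have E_lt : all (fun i => i.+1 < n) E.
  by apply/allP => i; rewrite mem_filter => /andP [/box_lt].
exists (map (zgen n) l ++ map (egen n) E); split; first exact: all_BR_gens_words.
rewrite brprod_words //; congr (_, _).
  by rewrite {1}(Sn_perm_of SnI); apply: eq_perm_part.
rewrite {1}(boxed_box_of boxJ); apply: eq_box_part => j j_lt.
rewrite mem_filter mem_iota /=; case box_j: (box_of J j) => /=.
  by rewrite (_ : j < 0 + n.-1) ?orbT //; lia.
by rewrite orbF; apply/esym/negP => /(allP l_box); rewrite box_j.
Qed.
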